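(* Let $-\omega$ be the automorphism of $\mathcal A_\theta^{alg}$ with $U_1\mapsto U_2$, $U_2\mapsto\lambda^{-1/2}U_1^{-1}U_2$, generating a group $\mathbb Z_6$, and let $H^0(\mathcal A_\theta^{alg},{}_{-\omega}\mathcal A_\theta^{alg\ast})$ be the space of formal series $\varphi=\sum\varphi_{n,m}U_1^nU_2^m$ with $((-\omega)\cdot a)\varphi=\varphi a$ for all $a\in\mathcal A_\theta^{alg}$, with $\mathbb Z_6$ acting termwise. Then $H^0(\mathcal A_\theta^{alg},{}_{-\omega}\mathcal A_\theta^{alg\ast})^{\mathbb Z_6}\cong\mathbb C$.
   Context: Let $\theta\in\mathbb R\setminus\mathbb Q$, $\lambda=e^{2\pi i\theta}$, $\lambda^s:=e^{2\pi i\theta s}$. $\mathcal A_\theta^{alg}$ is the complex algebra of finite sums $\sum a_{n,m}U_1^nU_2^m$ with $U_1,U_2$ invertible and $U_2U_1=\lambda U_1U_2$; formal series $\sum_{(n,m)\in\mathbb Z^2}\varphi_{n,m}U_1^nU_2^m$ with arbitrary coefficients form an $\mathcal A_\theta^{alg}$-bimodule via multiplication. Termwise action of an automorphism $h$: $h\cdot\sum\varphi_{n,m}U_1^nU_2^m=\sum\varphi_{n,m}\,h\cdot(U_1^nU_2^m)$. *)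

From HB Require Import structures.
From mathcomp Require Import all_boot all_order all_algebra.
From mathcomp Require Import all_classical all_reals.
From mathcomp Require Import exp trigo.
From mathcomp Require Import complex.
Set Implicit Arguments. Unset Strict Implicit. Unset Printing Implicit Defensive.
Import Order.TTheory GRing.Theory Num.Theory.
Local Open Scope ring_scope.

Section NCTorus.
Variables (R : realType) (theta : R).

Local Notation C := (R[i]).

(* lambda^s := e^{2 pi i theta s}, s real *)
Definition lam (s : R) : C :=
  (cos (2 * pi * theta * s) +i* sin (2 * pi * theta * s))%C.

(* A scalar multiple of a normally ordered monomial:  (c, (n, m)) stands for
   c * U1^n U2^m.  The basis {U1^n U2^m} spans A_theta^alg. *)
Definition smono := (C * (int * int))%type.

Definition munit : smono := (1, (0%Z, 0%Z)).

(* product, from U2 U1 = lambda U1 U2: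
   U1^n U2^m U1^p U2^q = lambda^{m p} U1^{n+p} U2^{m+q} *)
Definition mmul (x y : smono) : smono :=
  let: (c, (n, m)) := x in let: (d, (p, q)) := y in
  (c * d * lam (m * p)%:~R, (n + p, m + q)%R).

Definition minv (x : smono) : smono :=
  let: (c, (n, m)) := x in (c^-1 * lam (n * m)%:~R, (- n, - m)%R).

Definition mpowZ (x : smono) (k : int) : smono :=
  match k with
  | Posz j => iter j (mmul x) munit
  | Negz j => iter j.+1 (mmul (minv x)) munit
  end.

(* the automorphism  -omega : U1 |-> U2,  U2 |-> lambda^{-1/2} U1^{-1} U2 *)
Definition h_U1 : smono := (1, (0%Z, 1%Z)).
Definition h_U2 : smono := (lam (- (1 / 2)), ((-1)%Z, 1%Z)).

Definition h_mono (n m : int) : smono := mmul (mpowZ h_U1 n) (mpowZ h_U2 m).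

(* elements of A_theta^alg: finite sums  sum_t  t.1 * U1^(t.2.1) U2^(t.2.2) *)
Definition alg := seq smono.

Definition h_alg (a : alg) : alg :=
  [seq (let: (c, (n, m)) := t in let: (d, nm) := h_mono n m in (c * d, nm)) | t <- a].

Definition series := int -> int -> C.

(* x * phi for a scalar monomial x = c U1^n U2^m: the term phi(a,b) U1^a U2^b
   contributes  x * (phi(a,b) U1^a U2^b)  at index (n+a, m+b). *)
Definition lmul_mono (x : smono) (phi : series) : series :=
  fun p q => let: (_, (n, m)) := x in
    let a := (p - n)%R in let b := (q - m)%R in
    (mmul x (1, (a, b))).1 * phi a b.

Definition rmul_mono (phi : series) (x : smono) : series :=
  fun p q => let: (_, (n, m)) := x in
    let a := (p - n)%R in let b := (q - m)%R in
    (mmul (1, (a, b)) x).1 * phi a b.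

Definition lmul (a : alg) (phi : series) : series :=
  fun p q => \sum_(t <- a) lmul_mono t phi p q.

Definition rmul (phi : series) (a : alg) : series :=
  fun p q => \sum_(t <- a) rmul_mono phi t p q.

Definition in_H0 (phi : series) : Prop :=
  forall (a : alg) (p q : int), lmul (h_alg a) phi p q = rmul phi a p q.

(* Since the index
   map (n,m) |-> (-m, n+m) of h on basis monomials is a bijection of Z^2, the
   termwise image is determined by: coefficient of the index of h(U1^n U2^m)
   equals (scalar of h(U1^n U2^m)) * phi(n,m). *)
Definition termwise_image (phi psi : series) : Prop :=
  forall n m : int,
    let: (c, (p, q)) := h_mono n m in psi p q = c * phi n m.

Definition Z6_invariant (phi : series) : Prop := termwise_image phi phi.

End NCTorus.

(** Pairing the twisted trace condition with the single monomial U1^n U2^m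
    and reading off the coefficient of U1^n U2^m expresses phi(n+m, -n) as a
    fixed unit times phi(0,0).  Since (n, m) |-> (n+m, -n) is a bijection of
    Z^2, every solution is a multiple of phi(0,0).  The Gaussian series
    phi(a,b) = lambda^{-(a^2+b^2)/2} is a solution with phi(0,0) = 1, and it is
    invariant under -omega because that automorphism maps U1^n U2^m to
    lambda^{-m^2/2 - nm} U1^{-m} U2^{n+m}. *)
From HB Require Import structures.
From mathcomp Require Import all_boot all_order all_algebra.
From mathcomp Require Import all_classical all_reals.
From mathcomp Require Import exp trigo.
From mathcomp Require Import complex.
From mathcomp Require Import ring.
Import Order.TTheory GRing.Theory Num.Theory.
Local Open Scope ring_scope.

Arguments lam : simpl never.
Set Implicit Arguments.

Section TwistedTraces.
Variables (R : realType) (theta : R).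
Local Notation e := (lam theta).

Lemma lamD s t : e s * e t = e (s + t).
Proof.
rewrite /lam.
have -> : 2 * pi * theta * (s + t) = 2 * pi * theta * s + 2 * pi * theta * t.
  by ring.
rewrite cosD sinD; set x := 2 * pi * theta * s; set y := 2 * pi * theta * t.
transitivity ((cos x * cos y - sin x * sin y) +i* (cos x * sin y + sin x * cos y))%C.
  by [].
by congr Complex; ring.
Qed.

Lemma lam0 : e 0 = 1.
Proof. by rewrite /lam mulr0 cos0 sin0. Qed.

Lemma lam_neq0 s : e s != 0.
Proof.
apply/negP => /eqP es0; have := lamD s (- s).
by rewrite es0 mul0r addrN lam0 => /eqP; rewrite eq_sym oner_eq0.
Qed.

Lemma lamV s : (e s)^-1 = e (- s).
Proof. by apply: (mulfI (lam_neq0 s)); rewrite mulfV ?lam_neq0 // lamD subrr lam0. Qed.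

Lemma iter_mmul_U1 (s : int) k :
  iter k (mmul theta (1, (0%Z, s))) (munit R) = (1, (0%Z, s * k%:Z)).
Proof.
elim: k => [|k IH]; first by rewrite /munit /= mulr0.
rewrite iterS IH /mmul mulr0 lam0 !mulr1.
by congr (_, (_, _)); rewrite -addn1 PoszD mulrDr mulr1 addrC.
Qed.

Lemma mpowZ_U1 n : mpowZ theta (h_U1 R) n = (1, (0%Z, n)).
Proof.
case: n => j; rewrite /mpowZ; first by rewrite iter_mmul_U1 mul1r.
have -> : minv theta (h_U1 R) = (1, (0%Z, (-1)%Z)).
  by rewrite /minv /h_U1 invr1 mul0r lam0 mulr1.
by rewrite iter_mmul_U1 NegzE mulN1r.
Qed.

(* [s] is a sign, so that both h(U2) and its inverse are covered. *)
Lemma iter_mmul_U2 (s : int) k : s * s = 1 ->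
  iter k (mmul theta (e (- (1 / 2)), (- s, s))) (munit R) =
    (e (- ((k%:R : R) ^+ 2) / 2), (- (s * k%:Z), s * k%:Z)).
Proof.
move=> ss1; elim: k => [|k IH].
  by rewrite /munit /= mulr0 oppr0 expr0n /= oppr0 mul0r lam0.
rewrite iterS IH /mmul !lamD; congr (_, (_, _)).
- have ssR : (s%:~R : R) * s%:~R = 1 by rewrite -intrM ss1.
  congr e; rewrite -addn1 natrD intrM intrN.
  transitivity (- (k%:R ^+ 2) / 2 - 1 / 2 - k%:R * (s%:~R * s%:~R) : R).
    by rewrite mulrN; ring.
  by rewrite ssR; field.
- by rewrite -addn1 PoszD mulrDr mulr1 opprD addrC.
- by rewrite -addn1 PoszD mulrDr mulr1 addrC.
Qed.

Lemma mpowZ_U2 m :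
  mpowZ theta (h_U2 theta) m = (e (- ((m%:~R : R) ^+ 2) / 2), (- m, m)).
Proof.
case: m => j; rewrite /mpowZ.
  by rewrite (iter_mmul_U2 1) // !mul1r.
have -> : minv theta (h_U2 theta) = (e (- (1 / 2)), (- (-1), -1)).
  rewrite /minv /h_U2 lamV lamD; congr (_, (_, _)); congr e.
  by rewrite (_ : ((-1)%Z * 1%Z)%:~R = -1 :> R) ?mulr1 //; field.
rewrite (iter_mmul_U2 (-1)) // NegzE !mulN1r.
by congr (_, (_, _)); rewrite intrN sqrrN.
Qed.

Lemma h_monoE n m : h_mono theta n m =
  (e (- ((m%:~R : R) ^+ 2) / 2 - n%:~R * m%:~R), (- m, n + m)).
Proof.
rewrite /h_mono mpowZ_U1 mpowZ_U2 /mmul mul1r lamD add0r.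
by congr (_, (_, _)); rewrite mulrN intrN intrM.
Qed.

Definition h_term (t : smono R) : smono R :=
  let: (c, (n, m)) := t in let: (d, nm) := h_mono theta n m in (c * d, nm).

Lemma lmul_mono_h_term (phi : series R) c n m p q :
  lmul_mono theta (h_term (c, (n, m))) phi p q =
  c * e (- ((m%:~R : R) ^+ 2) / 2 - n%:~R * m%:~R) * e (((n + m) * (p + m))%:~R)
    * phi (p + m) (q - (n + m)).
Proof. by rewrite /h_term h_monoE /lmul_mono /mmul mulr1 opprK. Qed.

Lemma rmul_monoE (phi : series R) c n m p q :
  rmul_mono theta phi (c, (n, m)) p q =
  c * e (((q - m) * n)%:~R) * phi (p - n) (q - m).
Proof. by rewrite /rmul_mono /mmul mul1r. Qed.

Lemma in_H0_monoP (phi : series R) : in_H0 theta phi <->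
  forall c n m p q, lmul_mono theta (h_term (c, (n, m))) phi p q =
                    rmul_mono theta phi (c, (n, m)) p q.
Proof.
split=> [phiH0 c n m p q | phi_mono a p q].
  by have := phiH0 [:: (c, (n, m))] p q; rewrite /lmul /rmul /h_alg big_map !big_seq1.
rewrite /lmul /rmul /h_alg big_map.
by apply: eq_bigr => -[c [n m]] _; exact: phi_mono.
Qed.

Definition gauss : series R :=
  fun a b => e (- ((a%:~R : R) ^+ 2 + (b%:~R : R) ^+ 2) / 2).

Lemma gauss00 : gauss 0 0 = 1.
Proof. by rewrite /gauss -lam0; congr e; rewrite expr0n /= addr0 oppr0 mul0r. Qed.

Lemma gauss_in_H0 : in_H0 theta gauss.
Proof.
apply/in_H0_monoP => c n m p q.
rewrite lmul_mono_h_term rmul_monoE /gauss -!mulrA !lamD; congr (_ * e _).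
by rewrite !(intrD, intrM, intrN); field.
Qed.

Lemma gauss_Z6_invariant : Z6_invariant theta gauss.
Proof.
move=> n m; rewrite h_monoE /gauss lamD; congr e.
by rewrite !(intrD, intrM, intrN); field.
Qed.

(* The coefficient of U1^n U2^m in ((-omega) . U1^n U2^m) phi = phi U1^n U2^m. *)
Lemma in_H0_coef_shift (phi : series R) : in_H0 theta phi ->
  forall n m, phi (n + m) (- n) = gauss (n + m) (- n) * phi 0 0.
Proof.
move/in_H0_monoP => phiH0 n m; have := phiH0 1 n m n m.
rewrite lmul_mono_h_term rmul_monoE !mul1r !subrr mul0r lam0 mul1r lamD.
rewrite (_ : m - (n + m) = - n); last by ring.
move=> /(canRL (mulKf (lam_neq0 _))) ->; rewrite lamV; congr (e _ * _).
by rewrite /gauss !(intrD, intrM, intrN); field.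
Qed.

Lemma in_H0_coefE (phi : series R) : in_H0 theta phi ->
  forall p q, phi p q = phi 0 0 * gauss p q.
Proof.
move=> phiH0 p q; have := in_H0_coef_shift phiH0 (- q) (p + q).
rewrite (_ : - q + (p + q) = p) ?opprK => [->|]; last by ring.
by rewrite mulrC.
Qed.

End TwistedTraces.

Theorem mainTheorem9 (R : realType) (theta : R) (Htheta : irrational theta) :
  exists phi0 : series R,
    [/\ in_H0 theta phi0, Z6_invariant theta phi0,
        (exists p q, phi0 p q != 0) &
        forall phi : series R, in_H0 theta phi -> Z6_invariant theta phi ->
          exists z : R[i], forall p q, phi p q = z * phi0 p q].
Proof.
exists (gauss R theta); split.
- exact: gauss_in_H0.
- exact: gauss_Z6_invariant.
- by exists 0, 0; rewrite gauss00 oner_neq0.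
- by move=> phi phiH0 _; exists (phi 0 0); exact: in_H0_coefE.
Qed.
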